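(* Let $X$ be a $T_0$ $k$-bounded sober space and $x\in X$. If $E$ is an irreducible subset of $X$ whose supremum exists, with $\bigvee E\ge x$ and $E\subseteq\twoheaddownarrow_{\operatorname{Irr}} x$, then $\twoheaddownarrow_{\operatorname{Irr}} x$ is irreducible in $X$.
   Context: For a topological space $X$, a nonempty subset $E$ is irreducible if whenever $E\subseteq A_1\cup A_2$ with $A_1,A_2$ closed, $E\subseteq A_1$ or $E\subseteq A_2$. The specialisation order is $x\le y$ iff $x\in\operatorname{cl}(\{y\})$; $\uparrow x=\{z:z\ge x\}$; $\bigvee$ denotes supremum in this order. $\operatorname{Irr}^+(X)$ is the set of irreducible subsets whose supremum exists. $X$ is $k$-bounded sober if every closed set $F\in\operatorname{Irr}^+(X)$ is the closure of a unique singleton. $x\ll_{\operatorname{Irr}} y$ iff for every $E\in\operatorname{Irr}^+(X)$ with $\bigvee E\ge y$, $E\cap\uparrow x\ne\emptyset$; $\twoheaddownarrow_{\operatorname{Irr}} x=\{y:y\ll_{\operatorname{Irr}} x\}$. *)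

From HB Require Import structures.
From mathcomp Require Import all_boot all_order.
From mathcomp Require Import boolp classical_sets topology.
Set Implicit Arguments. Unset Strict Implicit. Unset Printing Implicit Defensive.
Local Open Scope classical_set_scope.

Section KBoundedSober.
Variable X : topologicalType.

Definition irreducible (E : set X) : Prop :=
  E !=set0 /\
  forall A1 A2 : set X, closed A1 -> closed A2 ->
    E `<=` A1 `|` A2 -> E `<=` A1 \/ E `<=` A2.

Definition spec_le (x y : X) : Prop := closure [set y] x.

Definition is_sup (E : set X) (s : X) : Prop :=
  (forall e, E e -> spec_le e s) /\
  (forall u, (forall e, E e -> spec_le e u) -> spec_le s u).

Definition IrrPlus (E : set X) : Prop :=
  irreducible E /\ exists s, is_sup E s.

Definition k_bounded_sober : Prop :=
  forall F : set X, closed F -> IrrPlus F ->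
    exists! x : X, F = closure [set x].

Definition way_below_irr (x y : X) : Prop :=
  forall E : set X, IrrPlus E ->
    (exists s, is_sup E s /\ spec_le y s) ->
    exists z, E z /\ spec_le x z.

Definition ddarrow_irr (x : X) : set X := [set y | way_below_irr y x].

End KBoundedSober.

From mathcomp Require Import all_boot all_order.
From mathcomp Require Import boolp classical_sets topology.
Set Implicit Arguments.
Local Open Scope classical_set_scope.

(* Since E is in Irr^+ with supremum above x, every y way below x lies under
   some element of E.  Hence the set of elements way below x sits between E
   and the down-set of E; closed sets are down-sets, so such a set is covered
   by two closed sets exactly when E is, and inherits irreducibility from E. *)

Section Irreducible.
Variable X : topologicalType.

Lemma closed_spec_le (A : set X) (y z : X) :
  closed A -> A z -> spec_le y z -> A y.
Proof.
move=> cA Az; rewrite /spec_le closureE => yz.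
by apply: yz; split => // w ->.
Qed.

Lemma irreducible_between (E D : set X) :
  irreducible E -> E `<=` D ->
  (forall y, D y -> exists z, E z /\ spec_le y z) ->
  irreducible D.
Proof.
move=> [[e Ee] irrE] ED Dbelow; split; first by exists e; exact: ED.
have down A : closed A -> E `<=` A -> D `<=` A.
  move=> cA EA y /Dbelow [z [Ez yz]].
  exact: closed_spec_le cA (EA _ Ez) yz.
move=> A1 A2 c1 c2 DA.
by case: (irrE A1 A2 c1 c2 (subset_trans ED DA)) => EA; [left|right];
  exact: down.
Qed.

Lemma way_below_irr_sup (E : set X) (s x y : X) :
  irreducible E -> is_sup E s -> spec_le x s -> way_below_irr y x ->
  exists z, E z /\ spec_le y z.
Proof. by move=> irrE supEs xs; apply; [split; last exists s | exists s]. Qed.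

End Irreducible.

Theorem lemma4p5 (X : topologicalType) (x : X) (E : set X) :
  kolmogorov_space X ->
  k_bounded_sober X ->
  irreducible E ->
  (exists s, is_sup E s /\ spec_le x s) ->
  E `<=` ddarrow_irr x ->
  irreducible (ddarrow_irr x).
Proof.
move=> _ _ irrE [s [supEs xs]] EsubD.
exact: irreducible_between irrE EsubD (fun y => way_below_irr_sup irrE supEs xs).
Qed.
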